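(* Let $m\ge 1$ and $d_k\ge 1$ be integers, let $u\in\mathbb{R}^m$ with $\|u\|=1$, and let $g_1,\ldots,g_{d_k}\in\mathbb{R}^m$ be nonzero vectors such that no $g_i$ is colinear with $u$. Consider the problem $$\min_{V_1,\ldots,V_{d_k}\in\mathbb{R}^m}\ \sum_{i=1}^{d_k} V_i^T g_i \quad\text{subject to}\quad u^T\Big(\sum_{j=1}^{d_k} V_j\Big)=2-d_k,\qquad \|V_i\|=1\ \ (i=1,\ldots,d_k).$$ Let $\phi_i$ denote the angle between $g_i$ and $u$ (so $\cos\phi_i = g_i^Tu/\|g_i\|$). Then the Lagrangian dual function of this problem, obtained by dualizing the linear constraint $u^T\sum_j V_j = 2-d_k$ with a multiplier $\lambda\in\mathbb{R}$ (the norm constraints being kept), is $$h(\lambda) = -\sum_{i=1}^{d_k}\sqrt{\|g_i\|^2 + 2\lambda\|g_i\|\cos(\phi_i)+\lambda^2} + (d_k-2)\lambda .$$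
   Context: The Lagrangian used is $L(\lambda,V)=\sum_i V_i^Tg_i+\lambda\big(u^T\sum_j V_j + d_k-2\big)$ and the dual function is its minimum over the unit-norm vectors $V_i$. This problem is the block subproblem for one discrete variable $x_k$ with $d_k$ values in a low-rank SDP relaxation of a pairwise graphical model; $u$ plays the role of the fixed last row $V_{d+1}$ of the low-rank factor. $\|\cdot\|$ is the Euclidean norm. *)

From HB Require Import structures.
From mathcomp Require Import all_boot all_order all_algebra.
From mathcomp Require Import all_classical all_reals.
Set Implicit Arguments. Unset Strict Implicit. Unset Printing Implicit Defensive.
Import Order.TTheory GRing.Theory Num.Theory.
Local Open Scope ring_scope.
Local Open Scope classical_set_scope.

Definition dotv (R : realType) (m : nat) (x y : 'rV[R]_m) : R :=
  \sum_(j < m) x 0 j * y 0 j.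

Definition normv (R : realType) (m : nat) (x : 'rV[R]_m) : R :=
  Num.sqrt (dotv x x).

Definition colinear (R : realType) (m : nat) (x y : 'rV[R]_m) : Prop :=
  exists c : R, x = c *: y \/ y = c *: x.

Definition cos_angle (R : realType) (m : nat) (g u : 'rV[R]_m) : R :=
  dotv g u / (normv g * normv u).

Definition lagrangian (R : realType) (m d : nat) (g : 'I_d -> 'rV[R]_m)
  (u : 'rV[R]_m) (lam : R) (V : 'I_d -> 'rV[R]_m) : R :=
  \sum_(i < d) dotv (V i) (g i) + lam * (dotv u (\sum_(j < d) V j) + d%:R - 2).

Definition unit_family (R : realType) (m d : nat) (V : 'I_d -> 'rV[R]_m) : Prop :=
  forall i, normv (V i) = 1.

Definition dual_fun (R : realType) (m d : nat) (g : 'I_d -> 'rV[R]_m)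
  (u : 'rV[R]_m) (lam : R) : R :=
  inf [set lagrangian g u lam V | V in [set V | unit_family V]].

From HB Require Import structures.
From mathcomp Require Import all_boot all_order all_algebra.
From mathcomp Require Import all_classical all_reals.
From mathcomp Require Import ring lra.
Import Order.TTheory GRing.Theory Num.Theory.

(* Dualizing the linear constraint makes the Lagrangian separable,
   [L(lam, V) = sum_i V_i.(g_i + lam u) + (d - 2) lam], and by Cauchy-Schwarz
   each term is minimized over unit vectors at [V_i = -(g_i + lam u)/|g_i + lam u|],
   with value [-|g_i + lam u|].  Non-colinearity keeps [g_i + lam u] nonzero, and
   expanding [|g_i + lam u|^2] with [|u| = 1] gives the closed form. *)

Local Open Scope ring_scope.

Section Dotv.
Context {R : realType} {m : nat}.
Implicit Types (x y z : 'rV[R]_m) (c : R).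

Lemma dotvC x y : dotv x y = dotv y x.
Proof. by apply: eq_bigr => j _; rewrite mulrC. Qed.

Lemma dotvDr x y z : dotv x (y + z) = dotv x y + dotv x z.
Proof. by rewrite /dotv -big_split; apply: eq_bigr => j _; rewrite mxE mulrDr. Qed.

Lemma dotvZr c x y : dotv x (c *: y) = c * dotv x y.
Proof. by rewrite /dotv mulr_sumr; apply: eq_bigr => j _; rewrite mxE mulrCA. Qed.

Lemma dotvDl x y z : dotv (x + y) z = dotv x z + dotv y z.
Proof. by rewrite dotvC dotvDr !(dotvC z). Qed.

Lemma dotvZl c x y : dotv (c *: x) y = c * dotv x y.
Proof. by rewrite dotvC dotvZr dotvC. Qed.

Lemma dotv0r x : dotv x 0 = 0.
Proof. by rewrite /dotv big1 // => j _; rewrite mxE mulr0. Qed.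

Lemma dotv_sumr (n : nat) x (y : 'I_n -> 'rV[R]_m) :
  dotv x (\sum_(i < n) y i) = \sum_(i < n) dotv x (y i).
Proof.
rewrite /dotv exchange_big; apply: eq_bigr => j _.
by rewrite summxE mulr_sumr.
Qed.

Lemma dotvv_ge0 x : 0 <= dotv x x.
Proof. by apply: sumr_ge0 => j _; rewrite -expr2 sqr_ge0. Qed.

Lemma dotvv_eq0 x : (dotv x x == 0) = (x == 0).
Proof.
apply/idP/eqP => [|->]; last by rewrite dotv0r.
rewrite psumr_eq0 => [/allP x0|j _]; last by rewrite -expr2 sqr_ge0.
apply/matrixP => i j; rewrite mxE (ord1 i).
by have /(_ (mem_index_enum j)) := x0 j; rewrite /= mulf_eq0 orbb => /eqP.
Qed.

Lemma normv_sqr x : normv x ^+ 2 = dotv x x.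
Proof. by rewrite sqr_sqrtr // dotvv_ge0. Qed.

Lemma normv_gt0 x : (0 < normv x) = (x != 0).
Proof. by rewrite sqrtr_gt0 lt_def dotvv_ge0 dotvv_eq0 andbT. Qed.

Lemma normvZ c x : normv (c *: x) = `|c| * normv x.
Proof. by rewrite /normv dotvZl dotvZr mulrA -expr2 sqrtrM ?sqr_ge0 // sqrtr_sqr. Qed.

(* Expand [0 <= |n x + y|^2] with [n = |y|] and [|x| = 1]: it equals [2 n (n + x.y)]. *)
Lemma dotv_unit_ge x y : normv x = 1 -> - normv y <= dotv x y.
Proof.
move=> x1; have [->|y0] := eqVneq y 0; first by rewrite /normv !dotv0r sqrtr0 oppr0.
have ny_gt0 : 0 < normv y by rewrite normv_gt0.
have := dotvv_ge0 (normv y *: x + y).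
rewrite dotvDl !dotvDr !dotvZl !dotvZr -!normv_sqr x1 (dotvC y x) => h.
have : 0 <= 2 * normv y * (normv y + dotv x y) by lra.
by rewrite pmulr_rge0 ?mulr_gt0 //; lra.
Qed.

Lemma normv_unit_opp y : y != 0 -> normv (- (normv y)^-1 *: y) = 1.
Proof.
rewrite -normv_gt0 => ny_gt0.
by rewrite normvZ normrN normfV gtr0_norm // mulVf ?gt_eqF.
Qed.

Lemma dotv_unit_opp y : y != 0 -> dotv (- (normv y)^-1 *: y) y = - normv y.
Proof.
rewrite -normv_gt0 => ny_gt0.
by rewrite dotvZl -normv_sqr expr2 mulNr mulrA mulVf ?mul1r ?gt_eqF.
Qed.

Lemma normv_addZ_unit c x y : normv y = 1 -> x != 0 ->
  normv (x + c *: y) = Num.sqrt (normv x ^+ 2 + 2 * c * normv x * cos_angle x y + c ^+ 2).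
Proof.
rewrite -normv_gt0 /cos_angle => y1 nx_gt0; congr Num.sqrt.
rewrite dotvDl !dotvDr !dotvZl !dotvZr -!normv_sqr y1 (dotvC y x) mulr1.
by field; rewrite gt_eqF.
Qed.

Lemma addZ_neq0 c x y : ~ colinear x y -> x + c *: y != 0.
Proof.
move=> ncol; apply/eqP => xcy0; apply: ncol; exists (- c); left.
by rewrite scaleNr -[x](addrK (c *: y)) xcy0 sub0r.
Qed.

End Dotv.

Lemma inf_attained (R : realType) (E : set R) x : E x -> lbound E x -> inf E = x.
Proof.
move=> Ex xlb; apply/le_anti; rewrite lb_le_inf ?andbT //; last by exists x.
by apply: ge_inf => //; exists x.
Qed.

Section Dual.
Context {R : realType} {m d : nat} {g : 'I_d -> 'rV[R]_m} {u : 'rV[R]_m} {lam : R}.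

Lemma lagrangianE V :
  lagrangian g u lam V = \sum_(i < d) dotv (V i) (g i + lam *: u) + (d%:R - 2) * lam.
Proof.
rewrite /lagrangian dotv_sumr.
under [in RHS]eq_bigr => i _ do rewrite dotvDr dotvZr.
under [X in lam * (X + _ - _)]eq_bigr => i _ do rewrite dotvC.
by rewrite big_split /= -mulr_sumr; ring.
Qed.

Hypothesis shift_neq0 : forall i, g i + lam *: u != 0.

Let dual_value := - \sum_(i < d) normv (g i + lam *: u) + (d%:R - 2) * lam.

Lemma lagrangian_ge V : unit_family V -> dual_value <= lagrangian g u lam V.
Proof.
move=> V1; rewrite lagrangianE lerD2r -sumrN.
by apply: ler_sum => i _; apply: dotv_unit_ge.
Qed.

Lemma lagrangian_argmin :
  exists2 V, unit_family V & lagrangian g u lam V = dual_value.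
Proof.
exists (fun i => - (normv (g i + lam *: u))^-1 *: (g i + lam *: u)) => [i|].
  exact: normv_unit_opp.
rewrite lagrangianE /dual_value -sumrN; congr (_ + _).
by apply: eq_bigr => i _; apply: dotv_unit_opp.
Qed.

Lemma dual_funE : dual_fun g u lam = dual_value.
Proof.
apply: inf_attained; first exact: lagrangian_argmin.
by move=> _ [V V1 <-]; apply: lagrangian_ge.
Qed.

End Dual.

Theorem theorem3 (R : realType) (m d : nat) (u : 'rV[R]_m) (g : 'I_d -> 'rV[R]_m)
  (hm : (1 <= m)%N) (hd : (1 <= d)%N) (hu : normv u = 1)
  (hg0 : forall i, g i != 0) (hgu : forall i, ~ colinear (g i) u) :
  forall lam : R,
    let h := - \sum_(i < d) Num.sqrt (normv (g i) ^+ 2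
                 + 2 * lam * normv (g i) * cos_angle (g i) u + lam ^+ 2)
             + (d%:R - 2) * lam in
    dual_fun g u lam = h /\
    exists V : 'I_d -> 'rV[R]_m, unit_family V /\ lagrangian g u lam V = h.
Proof.
move=> lam h.
have shift_neq0 i : g i + lam *: u != 0 by apply: addZ_neq0.
have -> : h = - \sum_(i < d) normv (g i + lam *: u) + (d%:R - 2) * lam.
  by congr (- _ + _); apply: eq_bigr => i _; rewrite normv_addZ_unit.
have [V V1 LV] := lagrangian_argmin shift_neq0.
by split; [exact: dual_funE | exists V].
Qed.
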